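(* Let $(N,\langle\cdot,\cdot\rangle,\varphi)$ be a modified $H$-type group (see context), with $m=\dim\mathfrak v$. The scalar curvature of $N$ is constant and equal to $S=-\dfrac{m\xi}{4}$.
   Context: Let $N$ be a 2-step nilpotent real Lie group with Lie algebra $\mathfrak n$, Lie bracket $[\cdot,\cdot]$ and center $\mathfrak z$, endowed with a left-invariant pseudo-Riemannian metric $\langle\cdot,\cdot\rangle$ for which $\mathfrak z$ is nondegenerate. Put $\mathfrak v=\mathfrak z^\perp$. For $z\in\mathfrak z$ define $j(z)\in\mathrm{End}(\mathfrak v)$ by $\langle [x,y],z\rangle=\langle y,j(z)x\rangle$ for all $x,y\in\mathfrak v$. Given a quadratic form $\varphi$ on $\mathfrak z$, $(N,\langle\cdot,\cdot\rangle,\varphi)$ is a modified $H$-type group if $j(z)^2=-\varphi(z)\,\mathrm{Id}_{\mathfrak v}$ for all $z\in\mathfrak z$. With $\{z_1,\dots,z_p\}$ a pseudo-orthonormal basis of $\mathfrak z$, $\xi=\sum_{k}\langle z_k,z_k\rangle\varphi(z_k)$. *)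

(* Lie algebra = finite-dimensional real vector space (vectType). *)
From HB Require Import structures.
From mathcomp Require Import all_boot all_order all_algebra.
From mathcomp Require Import reals.
Set Implicit Arguments. Unset Strict Implicit. Unset Printing Implicit Defensive.
Import Order.TTheory GRing.Theory Num.Theory.
Local Open Scope ring_scope.

Section Defs.
Variables (R : realType) (V : vectType R).

Definition bas : (\dim (fullv : {vspace V})).-tuple V := vbasis fullv.

Definition ltrace (f : V -> V) : R :=
  \sum_(i < \dim (fullv : {vspace V})) coord bas i (f (tnth bas i)).

Definition lie_bilinear_form (g : V -> V -> R) :=
  (forall a x y z, g (a *: x + y) z = a * g x z + g y z) /\
  (forall a x y z, g z (a *: x + y) = a * g z x + g z y).
Definition lie_symmetric_form (g : V -> V -> R) := forall x y, g x y = g y x.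
Definition lie_nondegenerate_form (g : V -> V -> R) :=
  forall x, (forall y, g x y = 0) -> x = 0.

(* a bilinear bracket which is skew; Jacobi is automatic for 2-step nilpotent *)
Definition lie_bilinear_map (br : V -> V -> V) :=
  (forall a x y z, br (a *: x + y) z = a *: br x z + br y z) /\
  (forall a x y z, br z (a *: x + y) = a *: br z x + br z y).
Definition lie_skew_map (br : V -> V -> V) := forall x y, br x y = - br y x.

Definition two_step_nilpotent (br : V -> V -> V) :=
  (forall x y w, br (br x y) w = 0) /\ (exists x y, br x y != 0).

(* Levi-Civita connection of a left-invariant metric, restricted to
   left-invariant fields: Koszul formula *)
Definition is_LC_connection (g : V -> V -> R) (br : V -> V -> V)
  (nab : V -> V -> V) :=
  forall x y z, 2 * g (nab x y) z = g (br x y) z - g (br y z) x + g (br z x) y.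

Definition curv (br nab : V -> V -> V) (x y z : V) : V :=
  nab x (nab y z) - nab y (nab x z) - nab (br x y) z.

Definition ricci (br nab : V -> V -> V) (y z : V) : R :=
  ltrace (fun x => curv br nab x y z).

Definition gram (g : V -> V -> R) : 'M[R]_(\dim (fullv : {vspace V})) :=
  \matrix_(i, j) g (tnth bas i) (tnth bas j).

Definition scalar_curvature (g : V -> V -> R) (br nab : V -> V -> V) : R :=
  \sum_(i < \dim (fullv : {vspace V})) \sum_(j < \dim (fullv : {vspace V}))
    (invmx (gram g)) i j * ricci br nab (tnth bas i) (tnth bas j).

Definition pseudo_orthonormal_basis (g : V -> V -> R) (U : {vspace V})
  (zs : seq V) :=
  basis_of U zs /\
  (forall k l, (k < size zs)%N -> (l < size zs)%N -> k != l ->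
     g zs`_k zs`_l = 0) /\
  (forall k, (k < size zs)%N -> g zs`_k zs`_k = 1 \/ g zs`_k zs`_k = -1).

End Defs.

From HB Require Import structures.
From mathcomp Require Import all_boot all_order all_algebra.
From mathcomp Require Import reals.
From mathcomp Require Import ring lra.
Set Implicit Arguments. Unset Strict Implicit. Unset Printing Implicit Defensive.
Import Order.TTheory GRing.Theory Num.Theory.
Local Open Scope ring_scope.

(* By the Koszul formula, nabla_x y = 1/2 ([x,y] - j(y)x - j(x)y), with j extended
   bilinearly to the whole algebra (through the center component of its first argument and
   the v-component of its second). Each j(c) is skew-adjoint, hence traceless, and brackets
   land in the center, on which they vanish; so only two contributions to Ricci survive:
     Ric(y,w) = - 1/4 tr(j(y) j(w)) + 1/2 sum_k eps_k <y, j(z_k)^2 w>.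
   Both are of the form <y, F w>, so the scalar curvature is tr F, and the H-type condition
   j(z_k)^2 = - phi(z_k) on v turns each trace into - phi(z_k) dim v. *)

Section Trace.
Variables (R : realType) (V : vectType R).
Local Notation n := (\dim (fullv : {vspace V})).
Local Notation b i := (tnth (bas V) i).

Lemma bas_expand u : u = \sum_(i < n) coord (bas V) i u *: b i.
Proof.
rewrite {1}(coord_vbasis (memvf u)); apply: eq_bigr => i _.
by rewrite (tnth_nth 0).
Qed.

Lemma coord_bas (i j : 'I_n) : coord (bas V) j (b i) = (i == j)%:R.
Proof. by rewrite (tnth_nth 0) coord_free //; exact: basis_free (vbasisP _). Qed.

Lemma eq_ltrace (f h : V -> V) : f =1 h -> ltrace f = ltrace h.
Proof. by move=> fh; apply: eq_bigr => i _; rewrite fh. Qed.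

Lemma ltraceD (f h : V -> V) : ltrace (fun x => f x + h x) = ltrace f + ltrace h.
Proof. by rewrite -big_split; apply: eq_bigr => i _; rewrite linearD. Qed.

Lemma ltraceZ a (f : V -> V) : ltrace (fun x => a *: f x) = a * ltrace f.
Proof. by rewrite mulr_sumr; apply: eq_bigr => i _; rewrite linearZ. Qed.

Lemma ltraceN (f : V -> V) : ltrace (fun x => - f x) = - ltrace f.
Proof. by rewrite -mulN1r -ltraceZ; apply: eq_ltrace => x; rewrite scaleN1r. Qed.

Lemma ltraceB (f h : V -> V) : ltrace (fun x => f x - h x) = ltrace f - ltrace h.
Proof. by rewrite ltraceD ltraceN. Qed.

Lemma ltrace_sum I (r : seq I) (F : I -> V -> V) :
  ltrace (fun x => \sum_(k <- r) F k x) = \sum_(k <- r) ltrace (F k).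
Proof. by rewrite exchange_big; apply: eq_bigr => i _; rewrite linear_sum. Qed.

Lemma ltrace_rank1 (l : {scalar V}) u : ltrace (fun x => l x *: u) = l u.
Proof.
rewrite /ltrace {2}(bas_expand u) linear_sum.
by apply: eq_bigr => i _; rewrite !linearZ /= mulrC.
Qed.

Lemma ltrace_id : ltrace (@id V) = n%:R.
Proof.
rewrite -[n]card_ord -sumr_const; apply: eq_bigr => i _.
by rewrite coord_bas eqxx.
Qed.

End Trace.

Section MetricTrace.
Variables (R : realType) (V : vectType R) (g : {biscalar V}).
Hypotheses (g_sym : lie_symmetric_form g) (g_nondeg : lie_nondegenerate_form g).
Local Notation n := (\dim (fullv : {vspace V})).
Local Notation b i := (tnth (bas V) i).
Local Notation G := (invmx (gram g)).

Lemma gram_unit : gram g \in unitmx.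
Proof.
rewrite -row_free_unit; apply/inj_row_free => v vG0.
set w := \sum_i v 0 i *: b i.
have gw0 j : g w (b j) = 0.
  transitivity ((v *m gram g) 0 j); last by rewrite vG0 mxE.
  by rewrite mxE linear_sumlz; apply: eq_bigr => i _; rewrite linearZl_LR mxE.
have w0 : w = 0.
  apply: g_nondeg => y; rewrite (bas_expand y) linear_sumr big1 // => j _.
  by rewrite linearZr_LR gw0 /= mulr0.
apply/rowP => i; rewrite mxE.
have /freeP := basis_free (vbasisP (fullv : {vspace V})); apply.
by rewrite -[RHS]w0; apply: eq_bigr => j _; rewrite (tnth_nth 0).
Qed.

Lemma invmx_gram_sym i j : G i j = G j i.
Proof.
have gramT : (gram g)^T = gram g by apply/matrixP => k l; rewrite !mxE g_sym.
by rewrite -{1}gramT -trmx_inv mxE.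
Qed.

Lemma gram_ltrace (F : V -> V) :
  \sum_i \sum_j G i j * g (b i) (F (b j)) = ltrace F.
Proof.
rewrite exchange_big; apply: eq_bigr => j _ /=.
under eq_bigr => i _ do rewrite [F (b j)]bas_expand linear_sumr mulr_sumr.
rewrite exchange_big /=.
transitivity (\sum_l coord (bas V) l (F (b j)) * (gram g *m G) l j).
  apply: eq_bigr => l _; rewrite mxE mulr_sumr; apply: eq_bigr => i _.
  by rewrite linearZr_LR !mxE g_sym /=; ring.
rewrite mulmxV ?gram_unit // (bigD1 j) //= big1 ?mxE ?eqxx ?mulr1 ?addr0 //.
by move=> l lj; rewrite mxE (negbTE lj) mulr0.
Qed.

Lemma ltrace_skew (F : V -> V) :
  (forall x y, g x (F y) = - g y (F x)) -> ltrace F = 0.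
Proof.
move=> Fskew; suff trN : ltrace F = - ltrace F by lra.
rewrite -gram_ltrace [LHS]exchange_big -sumrN; apply: eq_bigr => j _ /=.
rewrite -sumrN; apply: eq_bigr => i _.
by rewrite Fskew mulrN [in LHS]invmx_gram_sym.
Qed.

Lemma scalar_curvature_ltrace (br nab : V -> V -> V) (F : V -> V) :
  (forall y w, ricci br nab y w = g y (F w)) ->
  scalar_curvature g br nab = ltrace F.
Proof.
move=> ricciF; rewrite -gram_ltrace; apply: eq_bigr => i _.
by apply: eq_bigr => j _; rewrite ricciF.
Qed.

End MetricTrace.

Section ModifiedHType.
Variables (R : realType) (V : vectType R)
  (g : V -> V -> R) (br : V -> V -> V)
  (Z Vs : {vspace V}) (J : V -> V -> V) (phi : V -> R) (nab : V -> V -> V)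
  (zs : seq V).
Hypotheses (br_bilin : lie_bilinear_map br) (br_skew : lie_skew_map br)
  (br_nil : two_step_nilpotent br)
  (g_bilin : lie_bilinear_form g) (g_sym : lie_symmetric_form g)
  (g_nondeg : lie_nondegenerate_form g)
  (Z_center : forall x, x \in Z <-> (forall y, br x y = 0))
  (Z_nondeg : forall z, z \in Z -> (forall w, w \in Z -> g z w = 0) -> z = 0)
  (Vs_perp : forall x, x \in Vs <-> (forall z, z \in Z -> g x z = 0))
  (J_adj : forall z x, z \in Z -> x \in Vs ->
     J z x \in Vs /\ (forall y, y \in Vs -> g (br x y) z = g y (J z x)))
  (J_sqr : forall z x, z \in Z -> x \in Vs -> J z (J z x) = - (phi z) *: x)
  (nab_Koszul : is_LC_connection g br nab)
  (zs_basis : pseudo_orthonormal_basis g Z zs).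

Fact g_is_biscalar : bilinear_for *%R *%R g.
Proof. by split=> [z a x y | z a x y]; [exact: g_bilin.1 | exact: g_bilin.2]. Qed.
HB.instance Definition _ := bilinear_isBilinear.Build R V V R *%R *%R g g_is_biscalar.

Fact br_is_bilinear : bilinear_for *:%R *:%R br.
Proof. by split=> [z a x y | z a x y]; [exact: br_bilin.1 | exact: br_bilin.2]. Qed.
HB.instance Definition _ := bilinear_isBilinear.Build R V V V *:%R *:%R br br_is_bilinear.
(* The bilinear structure alone does not make [br y] canonically a [{linear V -> V}]. *)
HB.instance Definition _ y := GRing.isLinear.Build R V V *:%R (br y) (br_is_bilinear.2 y).

Lemma g_ext a c : (forall u, g u a = g u c) -> a = c.
Proof.
move=> eq_ac; apply/eqP; rewrite -subr_eq0; apply/eqP/g_nondeg => y.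
by rewrite linearBl /= !(g_sym _ y) eq_ac subrr.
Qed.

Lemma br_in_Z x y : br x y \in Z.
Proof. by apply/Z_center => w; exact: br_nil.1. Qed.

Lemma br_Zl z y : z \in Z -> br z y = 0.
Proof. by move/Z_center. Qed.

Lemma br_Zr z y : z \in Z -> br y z = 0.
Proof. by move=> /Z_center zy; rewrite br_skew zy oppr0. Qed.

Lemma g_Vs_Z x z : x \in Vs -> z \in Z -> g x z = 0.
Proof. by move=> /Vs_perp; apply. Qed.

Local Notation n := (\dim (fullv : {vspace V})).
Local Notation s := (size zs).
Local Notation z_ k := (zs`_k).
Local Notation eps k := (g (z_ k) (z_ k)).

Lemma zs_in_Z (k : 'I_s) : z_ k \in Z.
Proof. by case: zs_basis => /andP[/eqP <- _] _; apply/memv_span/mem_nth. Qed.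

Lemma eps_sqr (k : 'I_s) : eps k * eps k = 1.
Proof. by case: zs_basis => _ [_ /(_ k (ltn_ord k))] [] ->; rewrite ?mulrNN mulr1. Qed.

Lemma zs_orth (k l : 'I_s) : k != l -> g (z_ k) (z_ l) = 0.
Proof. by case: zs_basis => _ [orth _] kl; apply: orth. Qed.

Definition projZ x := \sum_(k < s) (eps k * g x (z_ k)) *: z_ k.
Definition projV x := x - projZ x.

Lemma g_projZ_zs x (l : 'I_s) : g (projZ x) (z_ l) = g x (z_ l).
Proof.
rewrite linear_sumlz (bigD1 l) //= big1 ?addr0 => [|k kl].
  by rewrite linearZl_LR /= mulrAC eps_sqr mul1r.
by rewrite linearZl_LR /= (zs_orth kl) mulr0.
Qed.

Lemma projZ_in_Z x : projZ x \in Z.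
Proof. by apply: memv_suml => k _; apply/memvZ/zs_in_Z. Qed.

Lemma orth_zs_in_Vs x : (forall k : 'I_s, g x (z_ k) = 0) -> x \in Vs.
Proof.
case: zs_basis => /andP[/eqP Zspan _] _ xzs; apply/Vs_perp => z.
rewrite -Zspan => /(coord_span (X := in_tuple zs)) ->.
by rewrite linear_sumr big1 // => k _; rewrite linearZr_LR /= xzs mulr0.
Qed.

Lemma projV_in_Vs x : projV x \in Vs.
Proof. by apply: orth_zs_in_Vs => k; rewrite linearBl /= g_projZ_zs subrr. Qed.

Lemma projZ_id x : x \in Z -> projZ x = x.
Proof.
move=> xZ; apply/eqP; rewrite eq_sym -subr_eq0; apply/eqP/Z_nondeg.
  by rewrite rpredB ?projZ_in_Z.
by move=> w wZ; rewrite g_Vs_Z ?projV_in_Vs.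
Qed.

Lemma projZ_Vs x : x \in Vs -> projZ x = 0.
Proof.
by move=> xVs; rewrite /projZ big1 // => k _; rewrite (g_Vs_Z xVs (zs_in_Z k)) mulr0 scale0r.
Qed.

Lemma projV_Vs x : x \in Vs -> projV x = x.
Proof. by move=> xVs; rewrite /projV projZ_Vs ?subr0. Qed.

Lemma g_Z_projZ w x : w \in Z -> g w (projZ x) = g w x.
Proof.
move=> wZ; rewrite -[x in RHS](subrK (projZ x)) linearDr /=.
by rewrite (g_sym w (x - _)) (g_Vs_Z (projV_in_Vs x) wZ) add0r.
Qed.

Lemma br_projV x y : br (projV x) (projV y) = br x y.
Proof.
rewrite linearBl !linearBr /= !(br_Zl _ (projZ_in_Z _)) !(br_Zr _ (projZ_in_Z _)).
by rewrite !subr0.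
Qed.

Lemma dim_Vs : (\dim Vs + s)%N = n.
Proof.
have dimZ : \dim Z = s by exact: (size_basis (X := in_tuple zs) zs_basis.1).
have capVZ : (Vs :&: Z = 0)%VS.
  apply/eqP; rewrite -subv0; apply/subvP => x; rewrite memv_cap memv0.
  case/andP=> xVs xZ; apply/eqP/Z_nondeg => // w; exact: g_Vs_Z.
have sumVZ : (Vs + Z = fullv)%VS.
  apply/eqP; rewrite eqEsubv subvf; apply/subvP => x _.
  by rewrite -(subrK (projZ x) x) memv_add ?projV_in_Vs ?projZ_in_Z.
by rewrite -dimZ -dimv_sum_cap sumVZ capVZ dimv0 addn0.
Qed.

(* J is only constrained on Z x Vs and is not assumed linear in z; jmap is its bilinear
   extension, characterized by g_jmap. *)
Definition jmap c x := \sum_(k < s) (eps k * g c (z_ k)) *: J (z_ k) (projV x).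

Lemma g_J_projV u x (k : 'I_s) : g u (J (z_ k) (projV x)) = g (br x u) (z_ k).
Proof.
have [JVs Jadj] := J_adj (zs_in_Z k) (projV_in_Vs x).
rewrite -[u in LHS](subrK (projZ u)) linearDl /= (g_sym (projZ u)).
by rewrite (g_Vs_Z JVs (projZ_in_Z u)) addr0 -Jadj ?projV_in_Vs // br_projV.
Qed.

Lemma g_jmap u c x : g u (jmap c x) = g (br x u) c.
Proof.
rewrite -(g_Z_projZ c (br_in_Z x u)) !linear_sumr.
by apply: eq_bigr => k _; rewrite !linearZr_LR /= g_J_projV.
Qed.

Lemma jmap_in_Vs c x : jmap c x \in Vs.
Proof.
apply: memv_suml => k _; apply: memvZ.
by case: (J_adj (zs_in_Z k) (projV_in_Vs x)).
Qed.

Fact jmap_is_bilinear : bilinear_for *:%R *:%R jmap.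
Proof.
split=> [x a c d | c a x y]; apply: g_ext => u.
  by rewrite !linearPr /= !g_jmap linearPr.
by rewrite !linearPr /= !g_jmap !linearPl.
Qed.
HB.instance Definition _ := bilinear_isBilinear.Build R V V V *:%R *:%R jmap jmap_is_bilinear.
HB.instance Definition _ y := GRing.isLinear.Build R V V *:%R (jmap y) (jmap_is_bilinear.2 y).

Lemma jmap_skew c x u : g u (jmap c x) = - g x (jmap c u).
Proof. by rewrite !g_jmap br_skew linearNl. Qed.

Lemma jmap_Zr c x : x \in Z -> jmap c x = 0.
Proof. by move=> xZ; apply: g_ext => u; rewrite g_jmap br_Zl // linear0l linear0r. Qed.

Lemma jmap_projZ c x : jmap (projZ c) x = jmap c x.
Proof. by apply: g_ext => u; rewrite !g_jmap g_Z_projZ ?br_in_Z. Qed.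

Lemma jmap_Vsl c x : c \in Vs -> jmap c x = 0.
Proof. by move=> cVs; rewrite -jmap_projZ projZ_Vs // linear0l. Qed.

Lemma jmap_expand c x : jmap c x = \sum_(k < s) (eps k * g c (z_ k)) *: jmap (z_ k) x.
Proof. by rewrite -jmap_projZ linear_sumlz; apply: eq_bigr => k _; rewrite linearZl_LR. Qed.

Lemma jmap_zs (l : 'I_s) x : jmap (z_ l) x = J (z_ l) (projV x).
Proof.
rewrite /jmap (bigD1 l) //= big1 ?addr0 => [|k kl]; first by rewrite eps_sqr scale1r.
by rewrite g_sym (zs_orth kl) mulr0 scale0r.
Qed.

Lemma jmap_zs_sqr (k : 'I_s) x : jmap (z_ k) (jmap (z_ k) x) = - phi (z_ k) *: projV x.
Proof.
have [JVs _] := J_adj (zs_in_Z k) (projV_in_Vs x).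
by rewrite !jmap_zs (projV_Vs JVs) J_sqr ?zs_in_Z ?projV_in_Vs.
Qed.

Lemma nabE x y : nab x y = 2^-1 *: (br x y - jmap y x - jmap x y).
Proof.
apply: g_ext => u; have := nab_Koszul x y u.
rewrite (g_sym (nab x y)) (g_sym (br x y)) (br_skew u x) linearNl /=.
by rewrite linearZr_LR !linearBr /= !g_jmap => Koszul; lra.
Qed.

Fact nab_is_bilinear : bilinear_for *:%R *:%R nab.
Proof.
split=> [w a x y | x a y w]; apply: g_ext => u; rewrite !nabE !linearPl !linearPr /=;
  by rewrite !(linearZr_LR, linearDr, linearNr) /=; ring.
Qed.
HB.instance Definition _ := bilinear_isBilinear.Build R V V V *:%R *:%R nab nab_is_bilinear.

Lemma nab_Zl c w : c \in Z -> nab c w = - 2^-1 *: jmap c w.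
Proof. by move=> cZ; rewrite nabE br_Zl // jmap_Zr // subrr sub0r scalerN scaleNr. Qed.

Lemma jmap_nab x w y : jmap (nab x w) y = 2^-1 *: jmap (br x w) y.
Proof.
by rewrite nabE linearZl_LR !linearBl /= !(jmap_Vsl _ (jmap_in_Vs _ _)) !subr0.
Qed.

Lemma ltrace_sum_rank1 (l : 'I_s -> {scalar V}) (u : 'I_s -> V) :
  ltrace (fun x => \sum_(k < s) (eps k * l k x) *: u k) = \sum_(k < s) eps k * l k (u k).
Proof.
rewrite ltrace_sum; apply: eq_bigr => k _.
by rewrite -ltrace_rank1 -ltraceZ; apply: eq_ltrace => x; rewrite scalerA.
Qed.

Definition ztrace (f : V -> V) := \sum_(k < s) eps k * g (f (z_ k)) (z_ k).

Lemma ltrace_in_Z (f : {linear V -> V}) : (forall x, f x \in Z) -> ltrace f = ztrace f.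
Proof.
move=> fZ; transitivity (ltrace (fun x => projZ (f x))).
  by apply: eq_ltrace => x; rewrite projZ_id.
exact: (ltrace_sum_rank1 (fun k => applyr g (z_ k) \o f) (fun k => z_ k)).
Qed.

Lemma ltrace_projZ_factor (f : {linear V -> V}) :
  (forall x, f (projZ x) = f x) -> ltrace f = ztrace f.
Proof.
move=> fP; transitivity (ltrace (fun x => \sum_(k < s) (eps k * g x (z_ k)) *: f (z_ k))).
  by apply: eq_ltrace => x; rewrite -fP linear_sum; apply: eq_bigr => k _; rewrite linearZ.
exact: (ltrace_sum_rank1 (fun k => applyr g (z_ k)) (fun k => f (z_ k))).
Qed.

Lemma ztrace_Vs f : (forall x, f x \in Vs) -> ztrace f = 0.
Proof. by move=> fVs; rewrite /ztrace big1 // => k _; rewrite (g_Vs_Z (fVs _) (zs_in_Z k)) mulr0. Qed.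

Lemma ltrace_projV : ltrace projV = (\dim Vs)%:R.
Proof.
have trZ : ltrace projZ = s%:R.
  rewrite (ltrace_sum_rank1 (fun k => applyr g (z_ k)) (fun k => z_ k)).
  by rewrite (eq_bigr (fun _ => 1)) ?sumr_const ?card_ord // => k _; rewrite eps_sqr.
by rewrite ltraceB ltrace_id trZ -dim_Vs natrD addrK.
Qed.

Lemma ltrace_jmap c : ltrace (jmap c) = 0.
Proof. by apply: (ltrace_skew g_sym g_nondeg) => x y; exact: jmap_skew. Qed.

Lemma ltrace_jmap_br y w :
  ltrace (fun x => jmap (br x y) w) = \sum_(k < s) eps k * g y (jmap (z_ k) (jmap (z_ k) w)).
Proof.
transitivity (ltrace (fun x => \sum_(k < s) (eps k * g (br x y) (z_ k)) *: jmap (z_ k) w)).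
  by apply: eq_ltrace => x; rewrite jmap_expand.
rewrite (ltrace_sum_rank1 (fun k => applyr g (z_ k) \o applyr br y) (fun k => jmap (z_ k) w)).
by apply: eq_bigr => k _; rewrite g_jmap.
Qed.

Lemma ltrace_nab_l u : ltrace (fun x => nab x u) = 0.
Proof.
transitivity (2^-1 * (ltrace (applyr br u) - ltrace (jmap u) - ltrace (applyr jmap u))).
  by rewrite -!ltraceB -ltraceZ; apply: eq_ltrace => x; rewrite nabE.
have ad_u : ltrace (applyr br u) = 0.
  rewrite ltrace_in_Z => [|x]; last exact: br_in_Z.
  by rewrite /ztrace big1 // => k _; rewrite /= br_Zl ?zs_in_Z // linear0l mulr0.
have jmap_u : ltrace (applyr jmap u) = 0.
  rewrite ltrace_projZ_factor => [|x]; last by rewrite /= jmap_projZ.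
  by rewrite ztrace_Vs // => x; exact: jmap_in_Vs.
by rewrite ad_u ltrace_jmap jmap_u !subr0 mulr0.
Qed.

Lemma ltrace_nab_br y w : ltrace (fun x => nab (br x y) w) =
  - 2^-1 * \sum_(k < s) eps k * g y (jmap (z_ k) (jmap (z_ k) w)).
Proof.
rewrite -ltrace_jmap_br -ltraceZ; apply: eq_ltrace => x.
exact: nab_Zl (br_in_Z x y).
Qed.

Lemma ltrace_br_nab y w : ltrace (fun x => br y (nab x w)) =
  - 2^-1 * \sum_(k < s) eps k * g (jmap (z_ k) y) (jmap (z_ k) w).
Proof.
rewrite (@ltrace_in_Z (br y \o applyr nab w)) => [|x]; last exact: br_in_Z.
rewrite /ztrace mulr_sumr; apply: eq_bigr => k _ /=.
rewrite nab_Zl ?zs_in_Z // linearZ /= linearZl_LR /= -(g_jmap (jmap (z_ k) w)) g_sym.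
by rewrite mulrCA.
Qed.

Lemma ltrace_jmap_nab y w : ltrace (fun x => jmap (nab x w) y) =
  - 2^-1 * \sum_(k < s) eps k * g (jmap (z_ k) y) (jmap (z_ k) w).
Proof.
transitivity (2^-1 * ltrace (fun x => jmap (br x w) y)).
  by rewrite -ltraceZ; apply: eq_ltrace => x; rewrite jmap_nab.
rewrite ltrace_jmap_br mulNr -mulrN -sumrN; congr (_ * _); apply: eq_bigr => k _.
by rewrite jmap_skew mulrN.
Qed.

Definition jtrace y w := ltrace (fun x => jmap y (jmap w x)).

Lemma ltrace_jmap_nab_r y w : ltrace (fun x => jmap y (nab x w)) = - 2^-1 * jtrace y w.
Proof.
have jmap_jmap_l : ltrace (jmap y \o applyr jmap w) = 0.
  rewrite ltrace_projZ_factor => [|x]; last by rewrite /= jmap_projZ.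
  by rewrite ztrace_Vs // => x; exact: jmap_in_Vs.
transitivity (2^-1 * (- jtrace y w - ltrace (jmap y \o applyr jmap w))).
  rewrite /jtrace -ltraceN -ltraceB -ltraceZ; apply: eq_ltrace => x.
  by rewrite nabE linearZ /= !linearBr /= jmap_Zr ?br_in_Z // sub0r.
by rewrite jmap_jmap_l subr0 mulrN mulNr.
Qed.

Lemma ltrace_nab_nab y w : ltrace (fun x => nab y (nab x w)) = 4^-1 * jtrace y w.
Proof.
transitivity (2^-1 * (ltrace (fun x => br y (nab x w))
  - ltrace (fun x => jmap (nab x w) y) - ltrace (fun x => jmap y (nab x w)))).
  by rewrite -!ltraceB -ltraceZ; apply: eq_ltrace => x; rewrite nabE.
by rewrite ltrace_br_nab ltrace_jmap_nab ltrace_jmap_nab_r; field.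
Qed.

Fact jtrace_is_scalar y : scalar (jtrace y).
Proof.
move=> a w w'; rewrite /jtrace -ltraceZ -ltraceD; apply: eq_ltrace => x.
by rewrite linearPl linearP.
Qed.
HB.instance Definition _ y := GRing.isLinear.Build R V R *%R (jtrace y) (jtrace_is_scalar y).

Lemma jtrace_expand y w :
  jtrace y w = g y (\sum_(k < s) (eps k * jtrace (z_ k) w) *: z_ k).
Proof.
transitivity (ltrace (fun x => \sum_(k < s) (eps k * g y (z_ k)) *: jmap (z_ k) (jmap w x))).
  by apply: eq_ltrace => x; rewrite jmap_expand.
rewrite ltrace_sum linear_sumr; apply: eq_bigr => k _.
by rewrite ltraceZ linearZr_LR /= mulrAC.
Qed.

Definition ricci_op w := 2^-1 *: \sum_(k < s) eps k *: jmap (z_ k) (jmap (z_ k) w)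
  - 4^-1 *: \sum_(k < s) (eps k * jtrace (z_ k) w) *: z_ k.

Lemma ricciE y w : ricci br nab y w = g y (ricci_op w).
Proof.
have gsum : g y (\sum_(k < s) eps k *: jmap (z_ k) (jmap (z_ k) w)) =
    \sum_(k < s) eps k * g y (jmap (z_ k) (jmap (z_ k) w)).
  by rewrite linear_sumr; apply: eq_bigr => k _; rewrite linearZr_LR.
rewrite /ricci /curv !ltraceB ltrace_nab_l ltrace_nab_nab ltrace_nab_br.
rewrite /ricci_op linearBr !linearZr_LR /= -jtrace_expand gsum.
by rewrite /=; ring.
Qed.

Lemma ltrace_ricci_op :
  ltrace ricci_op = - ((\dim Vs)%:R * \sum_(k < s) eps k * phi (z_ k)) / 4.
Proof.
set T := \sum_(k < s) eps k * jtrace (z_ k) (z_ k).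
have trT : T = - ((\dim Vs)%:R * \sum_(k < s) eps k * phi (z_ k)).
  rewrite mulr_sumr -sumrN; apply: eq_bigr => k _.
  by rewrite /jtrace (eq_ltrace (jmap_zs_sqr k)) ltraceZ ltrace_projV; ring.
rewrite ltraceB !ltraceZ ltrace_sum (ltrace_sum_rank1 (fun k => jtrace (z_ k)) (fun k => z_ k)).
under eq_bigr do rewrite ltraceZ.
by rewrite -/T trT; field.
Qed.

Lemma scalar_curvature_modified_Htype :
  scalar_curvature g br nab = - ((\dim Vs)%:R * \sum_(k < s) eps k * phi (z_ k)) / 4.
Proof. by rewrite (scalar_curvature_ltrace g_sym g_nondeg ricciE) ltrace_ricci_op. Qed.

End ModifiedHType.

Theorem theorem3p6 (R : realType) (V : vectType R)
  (g : V -> V -> R) (br : V -> V -> V)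
  (Z Vs : {vspace V}) (J : V -> V -> V) (phi : V -> R) (nab : V -> V -> V)
  (zs : seq V) :
  (* the Lie algebra: 2-step nilpotent *)
  lie_bilinear_map br -> lie_skew_map br -> two_step_nilpotent br ->
  (* pseudo-Riemannian (left-invariant) metric *)
  lie_bilinear_form g -> lie_symmetric_form g -> lie_nondegenerate_form g ->
  (* Z is the center, nondegenerate; Vs = Z^perp *)
  (forall x, x \in Z <-> (forall y, br x y = 0)) ->
  (forall z, z \in Z -> (forall w, w \in Z -> g z w = 0) -> z = 0) ->
  (forall x, x \in Vs <-> (forall z, z \in Z -> g x z = 0)) ->
  (* J z = j(z) : <[x,y],z> = <y, j(z) x> on Vs *)
  (forall z x, z \in Z -> x \in Vs ->
     J z x \in Vs /\ (forall y, y \in Vs -> g (br x y) z = g y (J z x))) ->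
  (* phi is a quadratic form on Z *)
  (exists B : V -> V -> R, lie_bilinear_form B /\ forall z, z \in Z -> phi z = B z z) ->
  (* modified H-type condition *)
  (forall z x, z \in Z -> x \in Vs -> J z (J z x) = - (phi z) *: x) ->
  (* Levi-Civita connection on left-invariant fields *)
  is_LC_connection g br nab ->
  (* pseudo-orthonormal basis of Z, defining xi *)
  pseudo_orthonormal_basis g Z zs ->
  let xi := \sum_(k < size zs) g zs`_k zs`_k * phi zs`_k in
  scalar_curvature g br nab = - ((\dim Vs)%:R * xi) / 4.
Proof.
(* Only the values of phi on the basis zs enter. *)
move=> br_bilin br_skew br_nil g_bilin g_sym g_nondeg Z_center Z_nondeg Vs_perp J_adj _ J_sqr
  nab_Koszul zs_basis xi.
exact: (scalar_curvature_modified_Htype br_bilin br_skew br_nil g_bilin g_sym g_nondeg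
  Z_center Z_nondeg Vs_perp J_adj J_sqr nab_Koszul zs_basis).
Qed.
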